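(* Let $\mathbb{A}$, its multiplication, the decomposition $A_3=C\oplus L$, the complex $\mathbb{B}=\mathbb{B}(\mathbb{A},C)$ and the ideal $J_C$ be as in the context. Suppose that $\operatorname{grade}J_C\ge 4$. Then $\mathbb{B}$ is acyclic. Moreover, either $\operatorname{grade}J_C=4$ or $J_C=R$.
   Context: Let $R$ be a commutative Noetherian ring and let $p\ge 1$, $q\ge 3$ be integers. Let $\mathbb{A}\colon 0\to A_3\xrightarrow{d_3}A_2\xrightarrow{d_2}A_1\xrightarrow{d_1}A_0=R$ be a complex of finitely generated free $R$-modules with $\operatorname{rank}A_1=p+2$, $\operatorname{rank}A_2=p+q$, $\operatorname{rank}A_3=q-1$, which is acyclic and whose dual complex $\mathbb{A}^*$ is also acyclic (equivalently, $H_0(\mathbb{A})=R/I$ with $I=\operatorname{im}d_1$ either a grade $3$ perfect ideal or the unit ideal). Fix a differential graded algebra structure on $\mathbb{A}$: $R$-bilinear products $A_1\times A_1\to A_2$ (alternating: $e\cdot e=0$, $e\cdot e'=-e'\cdot e$) and $A_1\times A_2\to A_3$ satisfying the Leibniz rules $d_2(e\cdot e')=d_1(e)e'-d_1(e')e$ and $d_3(e\cdot f)=d_1(e)f+d_2(f)\cdot e$ for $e,e'\in A_1$, $f\in A_2$. Fix a decomposition $A_3=C\oplus L$ with $C$ free of rank $q-2$ and $L$ free of rank $1$; let $\eta\colon A_3\to L$ be the projection and $\iota\colon C\to A_3$ the inclusion. Define the sequence $\mathbb{B}=\mathbb{B}(\mathbb{A},C)\colon 0\to C\xrightarrow{\delta_4}A_2\xrightarrow{\delta_3}\operatorname{Hom}(A_1,L)\oplus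 A_1\xrightarrow{\delta_2}\operatorname{Hom}(A_2,L)\xrightarrow{\delta_1}\operatorname{Hom}(C,L)$ by $\delta_4=d_3\circ\iota$; $\delta_3(f)=\big(e\mapsto \eta(e\cdot f),\ d_2(f)\big)$; $\delta_2(\varphi,e)=\big(f\mapsto \varphi(d_2f)+\eta(e\cdot f)\big)$; $\delta_1(\psi)=\psi\circ d_3\circ\iota$. (Up to the twist by $L$, $\delta_2=\delta_3^*$ and $\delta_1=\delta_4^*$.) Let $J_C=I_{q-2}(\delta_4)$ denote the ideal generated by the $(q-2)\times(q-2)$ minors of $\delta_4$. The grade of an ideal $J$ is $\inf\{i:\operatorname{Ext}^i_R(R/J,R)\neq 0\}$ (equal to $\infty$ for $J=R$). *)

(* Free modules of finite rank r are column vectors 'cV[R]_r,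
   R-linear maps between them are matrices acting by left multiplication. *)
From HB Require Import structures.
From mathcomp Require Import all_boot all_order all_algebra.
Set Implicit Arguments. Unset Strict Implicit. Unset Printing Implicit Defensive.
Import GRing.Theory.
Local Open Scope ring_scope.

Section Defs.
Variable R : comNzRingType.

Definition is_ideal (I : R -> Prop) : Prop :=
  I 0 /\ (forall x y, I x -> I y -> I (x + y)) /\ (forall r x, I x -> I (r * x)).

Definition noetherian : Prop :=
  forall I : nat -> R -> Prop, (forall n, is_ideal (I n)) ->
    (forall n x, I n x -> I n.+1 x) ->
    exists N, forall n x, (N <= n)%N -> I n x -> I N x.

(* the R-bilinear map R^a x R^b -> R^c with structure constants m i j
   (m i j = product of the i-th and j-th basis vectors) *)
Definition bil a b c (m : 'I_a -> 'I_b -> 'cV[R]_c) (u : 'cV[R]_a) (v : 'cV[R]_b)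
  : 'cV[R]_c := \sum_i \sum_j (u i 0 * v j 0) *: m i j.

(* the ideal I_k(M) generated by the k x k minors of M : 'M_(m, k)
   (i.e. of all maximal minors; rowsub f with f non injective has det 0) *)
Definition minors_ideal m k (M : 'M[R]_(m, k)) (x : R) : Prop :=
  exists c : {ffun 'I_k -> 'I_m} -> R,
    x = \sum_(f : {ffun 'I_k -> 'I_m}) c f * \det (rowsub f M).

(* grade J >= g, with grade J = inf { i : Ext^i_R(R/J, R) <> 0 }.
   Ext is computed from a free resolution of R/J by finite free modules
   F_0 = R^1 <-d0- F_1 = R^(n 0) <-(d 0)- F_2 = R^(n 1) <-(d 1)- ...
   (such a resolution exists since R is Noetherian; Ext does not depend on it).
   Dual modules Hom(F_i,R) are row vectors, dual maps are right multiplication.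
   The condition says Ext^i(R/J,R) = 0 for all i < g. *)
Definition grade_ge (J : R -> Prop) (g : nat) : Prop :=
  exists (n : nat -> nat) (d0 : 'M[R]_(1, n 0%N))
         (d : forall k, 'M[R]_(n k, n k.+1)),
    (forall x, J x <-> exists w : 'cV[R]_(n 0%N), (d0 *m w) 0 0 = x) /\
    d0 *m d 0%N = 0 /\ (forall k, d k *m d k.+1 = 0) /\
    (forall v : 'cV[R]_(n 0%N), d0 *m v = 0 -> exists w, v = d 0%N *m w) /\
    (forall k (v : 'cV[R]_(n k.+1)), d k *m v = 0 -> exists w, v = d k.+1 *m w) /\
    ((0 < g)%N -> forall x : 'rV[R]_1, x *m d0 = 0 -> x = 0) /\
    ((1 < g)%N -> forall y : 'rV[R]_(n 0%N), y *m d 0%N = 0 ->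
                   exists x : 'rV[R]_1, y = x *m d0) /\
    (forall k, (k.+2 < g)%N -> forall y : 'rV[R]_(n k.+1), y *m d k.+1 = 0 ->
                   exists x : 'rV[R]_(n k), y = x *m d k).

End Defs.

(* Write G for the matrix of the pairing A1 x A2 -> L, (e, f) |-> eta (e f),
   and dC = d3 iota.  Then B is the self-dual sequence dC, (G, d2), (G, d2)^T,
   dC^T.  The Leibniz rules give G d3 = d1^T eta and d2^T G + G^T d2 = 0, so B
   is a complex, and exactness of A and A^* gives exactness of B except at
   Hom(A2, L).  There, psi yields the scalar t = psi^T d3 ell, and adjugates of
   the maximal minors x of dC show that x t annihilates Ext^3(R/I, R), so x t
   lies in I.  Since grade J >= 4 exceeds the length 3 of the resolution A of
   R/I, the module R/I has no J-torsion, hence t lies in I, which yields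
   exactness there.  If grade J >= 5, the same argument applied to the dual of
   the length 4 resolution B shows that dC^T is onto, i.e. J = R by
   Cauchy-Binet. *)

From HB Require Import structures.
From mathcomp Require Import all_boot all_order all_algebra.
From mathcomp Require Import perm.
From Stdlib Require Import Classical.
Import GRing.Theory.
Set Implicit Arguments. Unset Strict Implicit. Unset Printing Implicit Defensive.
Local Open Scope ring_scope.

Section Matrices.
Variable K : comNzRingType.

Definition col_exact a b c (A : 'M[K]_(a, b)) (B : 'M[K]_(b, c)) :=
  forall v : 'cV_b, A *m v = 0 -> exists w, v = B *m w.
Definition row_exact a b c (B : 'M[K]_(c, a)) (A : 'M[K]_(a, b)) :=
  forall y : 'rV_a, y *m A = 0 -> exists x, y = x *m B.
Definition col_inj a b (A : 'M[K]_(a, b)) := forall v : 'cV_b, A *m v = 0 -> v = 0.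
Definition row_inj a b (A : 'M[K]_(a, b)) := forall x : 'rV_a, x *m A = 0 -> x = 0.

Lemma cauchy_binet k m (A : 'M[K]_(k, m)) (B : 'M[K]_(m, k)) :
  \det (A *m B) = \sum_(f : {ffun 'I_k -> 'I_m}) (\prod_i A i (f i)) * \det (rowsub f B).
Proof.
rewrite /determinant.
transitivity (\sum_(s : 'S_k) \sum_(f : {ffun 'I_k -> 'I_m})
   (-1) ^+ s * ((\prod_i A i (f i)) * \prod_i B (f i) (s i))).
  apply: eq_bigr => s _; rewrite -big_distrr /=; congr (_ * _).
  rewrite (eq_bigr (fun i => \sum_j A i j * B j (s i))); last by move=> i _; rewrite mxE.
  by rewrite bigA_distr_bigA /=; apply: eq_bigr => f _; rewrite big_split.
rewrite exchange_big /=; apply: eq_bigr => f _; rewrite big_distrr /=.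
apply: eq_bigr => s _; rewrite mulrCA; congr (_ * (_ * _)).
by apply: eq_bigr => i _; rewrite mxE.
Qed.

Lemma col_exists_mx a c m (B : 'M[K]_(a, c)) (V : 'M[K]_(a, m)) :
  (forall j, exists w : 'cV_c, col j V = B *m w) -> exists W, V = B *m W.
Proof.
case/fin_all_exists => w Hw; exists (\matrix_(i, j) w j i 0).
apply/matrixP => i j; have /colP/(_ i) := Hw j; rewrite !mxE => ->.
by apply: eq_bigr => k _; rewrite !mxE.
Qed.

Lemma row_exists_mx a c m (B : 'M[K]_(c, a)) (Y : 'M[K]_(m, a)) :
  (forall i, exists x : 'rV_c, row i Y = x *m B) -> exists X, Y = X *m B.
Proof.
case/fin_all_exists => x Hx; exists (\matrix_(i, j) x i 0 j).
apply/matrixP => i j; have /rowP/(_ j) := Hx i; rewrite !mxE => ->.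
by apply: eq_bigr => k _; rewrite !mxE.
Qed.

Lemma col_exact_mx a b c m (A : 'M[K]_(a, b)) (B : 'M[K]_(b, c)) :
  col_exact A B -> forall V : 'M_(b, m), A *m V = 0 -> exists W, V = B *m W.
Proof.
move=> AB V AV0; apply: col_exists_mx => j; apply: AB.
by rewrite colE mulmxA AV0 mul0mx.
Qed.

Lemma row_exact_mx a b c m (B : 'M[K]_(c, a)) (A : 'M[K]_(a, b)) :
  row_exact B A -> forall Y : 'M_(m, a), Y *m A = 0 -> exists X, Y = X *m B.
Proof.
move=> BA Y YA0; apply: row_exists_mx => i; apply: BA.
by rewrite rowE -mulmxA YA0 mulmx0.
Qed.

Lemma col_inj_mx a b m (A : 'M[K]_(a, b)) :
  col_inj A -> forall V : 'M_(b, m), A *m V = 0 -> V = 0.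
Proof.
move=> injA V AV0; apply/matrixP => i j.
have /colP/(_ i) : col j V = 0 by apply: injA; rewrite colE mulmxA AV0 mul0mx.
by rewrite !mxE.
Qed.

Lemma row_inj_mx a b m (A : 'M[K]_(a, b)) :
  row_inj A -> forall Y : 'M_(m, a), Y *m A = 0 -> Y = 0.
Proof.
move=> injA Y YA0; apply/row_matrixP => i; rewrite row0; apply: injA.
by rewrite -row_mul YA0 row0.
Qed.

Lemma trmx11 (A : 'M[K]_1) : A^T = A.
Proof. by rewrite [A]mx11_scalar tr_scalar_mx. Qed.

Lemma mx_delta_entry a b (A : 'M[K]_(a, b)) i j :
  A i j = ((delta_mx 0 i : 'rV_a) *m A *m (delta_mx j 0 : 'cV_b)) 0 0.
Proof. by rewrite -rowE -colE !mxE. Qed.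

Lemma tr_mulmx_delta_entry a b (v : 'cV[K]_a) (A : 'M[K]_(a, b)) j :
  (v^T *m A *m (delta_mx j 0 : 'cV_b)) 0 0 = (A^T *m v) j 0.
Proof.
by rewrite -colE !mxE; apply: eq_bigr => i _; rewrite !mxE mulrC.
Qed.

Lemma minors_ideal_left_mul m k (M : 'M[K]_(m, k)) x :
  minors_ideal M x -> exists L : 'M_(k, m), L *m M = x%:M.
Proof.
case=> c ->; exists (\sum_f c f *: (\adj (rowsub f M) *m rowsub f 1%:M)).
rewrite mulmx_suml raddf_sum; apply: eq_bigr => f _.
by rewrite -scalemxAl -mulmxA -rowsubE mul_adj_mx scale_scalar_mx.
Qed.

Lemma minors_ideal_mul_im m k (M : 'M[K]_(m, k)) x (t : 'cV_k) :
  minors_ideal M x -> exists w, x *: t = M^T *m w.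
Proof.
case/minors_ideal_left_mul => L LM; exists (L^T *m t).
by rewrite mulmxA -trmx_mul LM tr_scalar_mx mul_scalar_mx.
Qed.

Lemma minors_ideal_of_left_inverse m k (M : 'M[K]_(m, k)) (X : 'M[K]_(k, m)) :
  X *m M = 1%:M -> forall x, minors_ideal M x.
Proof.
move=> XM x; exists (fun f => x * \prod_i X i (f i)).
transitivity (x * \det (X *m M)); first by rewrite XM det1 mulr1.
rewrite cauchy_binet big_distrr; apply: eq_bigr => f _.
by rewrite /= mulrA.
Qed.

Lemma bil0l a b c (m : 'I_a -> 'I_b -> 'cV[K]_c) (v : 'cV[K]_b) : bil m 0 v = 0.
Proof.
rewrite /bil big1 // => i _; rewrite big1 // => j _.
by rewrite mxE mul0r scale0r.
Qed.

(* s times the identity of the dual complex is then null-homotopic; the degree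
   0 component of the homotopy puts s in the image of f1. *)
Lemma scalar_factor_in_im a1 a2 a3 (f1 : 'M[K]_(1, a1)) (f2 : 'M[K]_(a1, a2))
    (f3 : 'M[K]_(a2, a3)) :
  f1 *m f2 = 0 -> f2 *m f3 = 0 -> row_inj f1 -> row_exact f1 f2 -> row_exact f2 f3 ->
  forall s (H : 'M_(a3, a2)), H *m f3 = s%:M -> exists k, f1 *m k = s%:M.
Proof.
move=> f12 f23 ex0 ex1 ex2 s H Hf3.
have [H2 HH2] : exists H2, f3 *m H - s%:M = H2 *m f2.
  apply: (row_exact_mx ex2).
  by rewrite mulmxBl -mulmxA Hf3 mul_mx_scalar mul_scalar_mx subrr.
have [H1 HH1] : exists H1, f2 *m H2 + s%:M = H1 *m f1.
  apply: (row_exact_mx ex1).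
  rewrite mulmxDl -mulmxA -HH2 mulmxBr mulmxA f23 mul0mx.
  by rewrite mul_mx_scalar mul_scalar_mx sub0r addNr.
exists H1; apply/eqP; rewrite -subr_eq0; apply/eqP; apply: (row_inj_mx ex0).
rewrite mulmxBl -mulmxA -HH1 mulmxDr mulmxA f12 mul0mx add0r.
by rewrite mul_mx_scalar mul_scalar_mx subrr.
Qed.

(* Lift t d0 along e to a chain map from the resolution of R/J to the complex
   e, then use Ext^i(R/J, R) = 0 for i <= 4 to build a null-homotopy of it;
   its degree 0 part exhibits t as an element of the image of e1. *)
Lemma grade_chase4 b0 b1 b2 b3 b4 (e1 : 'M[K]_(b0, b1)) (e2 : 'M[K]_(b1, b2))
    (e3 : 'M[K]_(b2, b3)) (e4 : 'M[K]_(b3, b4))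
    (n : nat -> nat) (d0 : 'M[K]_(1, n 0%N)) (d : forall k, 'M[K]_(n k, n k.+1)) :
  e1 *m e2 = 0 -> e2 *m e3 = 0 -> e3 *m e4 = 0 ->
  col_exact e1 e2 -> col_exact e2 e3 -> col_exact e3 e4 -> col_inj e4 ->
  d0 *m d 0%N = 0 -> (forall k, d k *m d k.+1 = 0) ->
  row_inj d0 -> row_exact d0 (d 0%N) -> row_exact (d 0%N) (d 1%N) ->
  row_exact (d 1%N) (d 2%N) ->
  (forall Y : 'M_(b4, n 3%N), Y *m d 3%N = 0 -> exists X, Y = X *m d 2%N) ->
  forall (t : 'cV_b0) W0, t *m d0 = e1 *m W0 -> exists w, t = e1 *m w.
Proof.
move=> c1 c2 c3 x1 x2 x3 x4 h0 hd E0 E1 E2 E3 E4 t W0 HW0.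
have [W1 HW1] : exists W1, W0 *m d 0%N = e2 *m W1.
  by apply: (col_exact_mx x1); rewrite mulmxA -HW0 -mulmxA h0 mulmx0.
have [W2 HW2] : exists W2, W1 *m d 1%N = e3 *m W2.
  by apply: (col_exact_mx x2); rewrite mulmxA -HW1 -mulmxA hd mulmx0.
have [W3 HW3] : exists W3, W2 *m d 2%N = e4 *m W3.
  by apply: (col_exact_mx x3); rewrite mulmxA -HW2 -mulmxA hd mulmx0.
have [X3 HX3] : exists X3, W3 = X3 *m d 2%N.
  by apply/E4/(col_inj_mx x4); rewrite mulmxA -HW3 -mulmxA hd mulmx0.
have [X2 HX2] : exists X2, W2 - e4 *m X3 = X2 *m d 1%N.
  by apply: (row_exact_mx E3); rewrite mulmxBl HW3 HX3 -!mulmxA subrr.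
have [X1 HX1] : exists X1, W1 - e3 *m X2 = X1 *m d 0%N.
  apply: (row_exact_mx E2).
  by rewrite mulmxBl HW2 -mulmxA -HX2 mulmxBr mulmxA c3 mul0mx subr0 subrr.
have [X0 HX0] : exists X0, W0 - e2 *m X1 = X0 *m d0.
  apply: (row_exact_mx E1).
  by rewrite mulmxBl HW1 -mulmxA -HX1 mulmxBr mulmxA c2 mul0mx subr0 subrr.
exists X0; apply/eqP; rewrite -subr_eq0; apply/eqP; apply: (row_inj_mx E0).
by rewrite mulmxBl HW0 -mulmxA -HX0 mulmxBr mulmxA c1 mul0mx subr0 subrr.
Qed.

Lemma ideal_mul_im_generators b0 b1 (e1 : 'M[K]_(b0, b1)) n0 (d0 : 'M[K]_(1, n0))
    (J : K -> Prop) (t : 'cV_b0) :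
  (forall x, J x <-> exists w : 'cV_n0, (d0 *m w) 0 0 = x) ->
  (forall x, J x -> exists w, x *: t = e1 *m w) -> exists W0, t *m d0 = e1 *m W0.
Proof.
move=> HJ Jt; apply: col_exists_mx => l.
rewrite colE -mulmxA -colE [col l d0]mx11_scalar mxE mul_mx_scalar.
by apply/Jt/HJ; exists (delta_mx l 0); rewrite -colE mxE.
Qed.

Lemma coker_torsionfree3 b0 b1 b2 b3 (e1 : 'M[K]_(b0, b1)) (e2 : 'M[K]_(b1, b2))
    (e3 : 'M[K]_(b2, b3)) (J : K -> Prop) :
  e1 *m e2 = 0 -> e2 *m e3 = 0 ->
  col_exact e1 e2 -> col_exact e2 e3 -> col_inj e3 -> grade_ge J 4 ->
  forall t : 'cV_b0, (forall x, J x -> exists w, x *: t = e1 *m w) ->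
  exists w, t = e1 *m w.
Proof.
move=> c1 c2 x1 x2 x3 [n [d0 [d [HJ [h0 [hd [_ [_ [E0 [E1 E]]]]]]]]]] t Jt.
have [W0 HW0] := ideal_mul_im_generators HJ Jt.
apply: (grade_chase4 (e4 := 0 : 'M_(b3, 0)) c1 c2 _ x1 x2 _ _ h0 hd
  (E0 isT) (E1 isT) (E 0%N isT) (E 1%N isT) _ HW0).
- by rewrite mulmx0.
- by move=> v /x3 ->; exists 0; rewrite mulmx0.
- by move=> v _; apply/matrixP => -[].
- by move=> Y _; exists 0; apply/matrixP => -[].
Qed.

Lemma coker_torsionfree4 b0 b1 b2 b3 b4 (e1 : 'M[K]_(b0, b1)) (e2 : 'M[K]_(b1, b2))
    (e3 : 'M[K]_(b2, b3)) (e4 : 'M[K]_(b3, b4)) (J : K -> Prop) :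
  e1 *m e2 = 0 -> e2 *m e3 = 0 -> e3 *m e4 = 0 ->
  col_exact e1 e2 -> col_exact e2 e3 -> col_exact e3 e4 -> col_inj e4 ->
  grade_ge J 5 ->
  forall t : 'cV_b0, (forall x, J x -> exists w, x *: t = e1 *m w) ->
  exists w, t = e1 *m w.
Proof.
move=> c1 c2 c3 x1 x2 x3 x4 [n [d0 [d [HJ [h0 [hd [_ [_ [E0 [E1 E]]]]]]]]]] t Jt.
have [W0 HW0] := ideal_mul_im_generators HJ Jt.
exact: (grade_chase4 c1 c2 c3 x1 x2 x3 x4 h0 hd (E0 isT) (E1 isT) (E 0%N isT)
  (E 1%N isT) (row_exact_mx (E 2%N isT)) HW0).
Qed.

End Matrices.

Section DGAlgebra.
Variables (R : comNzRingType) (p q : nat).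
Variables (d1 : 'M[R]_(1, p + 2)) (d2 : 'M[R]_(p + 2, p + q)) (d3 : 'M[R]_(p + q, q - 1)).
Hypotheses (hd12 : d1 *m d2 = 0) (hd23 : d2 *m d3 = 0).
Hypotheses (hex1 : col_exact d1 d2) (hex2 : col_exact d2 d3) (hex3 : col_inj d3).
Hypotheses (hdex0 : row_inj d1) (hdex1 : row_exact d1 d2) (hdex2 : row_exact d2 d3).
Variables (m1 : 'I_(p + 2) -> 'I_(p + 2) -> 'cV[R]_(p + q))
          (m2 : 'I_(p + 2) -> 'I_(p + q) -> 'cV[R]_(q - 1)).
Hypothesis hanti : forall e e' : 'cV[R]_(p + 2), bil m1 e e' = - bil m1 e' e.
Hypothesis hleib2 : forall (e : 'cV[R]_(p + 2)) (f : 'cV[R]_(p + q)),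
  d3 *m bil m2 e f = (d1 *m e) 0 0 *: f + bil m1 (d2 *m f) e.
Variables (iota : 'M[R]_(q - 1, q - 2)) (ell : 'cV[R]_(q - 1))
          (pi : 'M[R]_(q - 2, q - 1)) (eta : 'rV[R]_(q - 1)).
Hypotheses (hpi : pi *m iota = 1%:M) (heta : eta *m ell = 1%:M)
           (hei : eta *m iota = 0) (hsum : iota *m pi + ell *m eta = 1%:M).

Definition eta_pairing : 'M[R]_(p + 2, p + q) := \matrix_(i, j) (eta *m m2 i j) 0 0.

Local Notation G := eta_pairing.
Local Notation dC := (d3 *m iota).
Local Notation J := (minors_ideal dC).

Lemma eta_bil e f : eta *m bil m2 e f = e^T *m G *m f.
Proof.
apply/matrixP => a b; rewrite !ord1 /bil mulmx_sumr summxE !mxE.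
under eq_bigr => i _ do rewrite mulmx_sumr summxE.
rewrite exchange_big /=; apply: eq_bigr => j _.
rewrite !mxE big_distrl /=; apply: eq_bigr => i _.
by rewrite -scalemxAr !mxE mulrAC.
Qed.

Lemma eta_bil_delta_l f i : (eta *m bil m2 (delta_mx i 0) f) 0 0 = (G *m f) i 0.
Proof. by rewrite eta_bil trmx_delta -mulmxA -rowE mxE. Qed.

Lemma eta_bil_delta_r e j : (eta *m bil m2 e (delta_mx j 0)) 0 0 = (G^T *m e) j 0.
Proof. by rewrite eta_bil tr_mulmx_delta_entry. Qed.

Lemma bil_d3 e a : bil m2 e (d3 *m a) = (d1 *m e) 0 0 *: a.
Proof.
apply/eqP; rewrite -subr_eq0; apply/eqP; apply: hex3.
by rewrite mulmxBr hleib2 mulmxA hd23 mul0mx bil0l addr0 -scalemxAr subrr.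
Qed.

Lemma bil_d2_skew f g : bil m2 (d2 *m f) g + bil m2 (d2 *m g) f = 0.
Proof.
apply: hex3; rewrite mulmxDr !hleib2 !mulmxA hd12 !mul0mx mxE !scale0r !add0r.
by rewrite hanti addNr.
Qed.

Lemma eta_pairing_d3 : G *m d3 = d1^T *m eta.
Proof.
apply/matrixP => i c.
rewrite mx_delta_entry (mulmxA _ G) -(mulmxA _ d3) -trmx_delta -eta_bil bil_d3.
by rewrite -scalemxAr -!colE !mxE big_ord1 !mxE.
Qed.

Lemma eta_pairing_d2_skew : d2^T *m G + G^T *m d2 = 0.
Proof.
have E k l : (d2^T *m G) k l = (eta *m bil m2 (d2 *m delta_mx k 0) (delta_mx l 0)) 0 0.
  by rewrite eta_bil trmx_mul trmx_delta mx_delta_entry !mulmxA.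
have -> : G^T *m d2 = (d2^T *m G)^T by rewrite trmx_mul trmxK.
apply/matrixP => i j; rewrite [LHS]mxE [X in _ + X]mxE !E.
move: (bil_d2_skew (delta_mx i 0) (delta_mx j 0)) => /(congr1 (mulmx eta)).
by move=> /matrixP/(_ 0 0); rewrite mulmxDr mulmx0 mxE => ->; rewrite !mxE.
Qed.

Lemma d3_split : d3 = dC *m pi + d3 *m ell *m eta.
Proof. by rewrite -!mulmxA -mulmxDr hsum mulmx1. Qed.

Lemma eta_pairing_dC : G *m dC = 0.
Proof. by rewrite mulmxA eta_pairing_d3 -mulmxA hei mulmx0. Qed.

Lemma d2_dC : d2 *m dC = 0.
Proof. by rewrite mulmxA hd23 mul0mx. Qed.

Lemma dC_inj : col_inj dC.
Proof.
move=> c dCc0; have iota_c0 : iota *m c = 0 by apply: hex3; rewrite mulmxA.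
by rewrite -[c]mul1mx -hpi -mulmxA iota_c0 mulmx0.
Qed.

Lemma exact_at_A2 (f : 'cV_(p + q)) :
  G *m f = 0 -> d2 *m f = 0 -> exists c, f = dC *m c.
Proof.
move=> Gf0 /hex2 [a fE]; subst f; exists (pi *m a).
have eta_a0 : eta *m a = 0.
  apply: hdex0; rewrite -[eta *m a]trmx11 -[d1]trmxK -trmx_mul mulmxA.
  by rewrite -eta_pairing_d3 -mulmxA Gf0 trmx0.
by rewrite -[a in LHS]mul1mx -hsum mulmxDl -!mulmxA eta_a0 !mulmx0 addr0 !mulmxA.
Qed.

Lemma exact_at_A1dual_A1 (phi e : 'cV_(p + 2)) :
  d2^T *m phi + G^T *m e = 0 -> exists f, G *m f = phi /\ d2 *m f = e.
Proof.
move=> phi_e0.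
have d1e0 : d1 *m e = 0.
  have : (d3 *m ell)^T *m (d2^T *m phi + G^T *m e) = 0 by rewrite phi_e0 mulmx0.
  rewrite mulmxDr !mulmxA -!trmx_mul !mulmxA hd23 !mul0mx trmx0 mul0mx add0r.
  by rewrite eta_pairing_d3 -(mulmxA d1^T) heta mulmx1 trmxK.
have [f0 ef0] := hex1 d1e0.
have [x Hx] : exists x, (phi - G *m f0)^T = x *m d1.
  apply: hdex1; apply: trmx_inj; rewrite trmx_mul trmxK trmx0 mulmxBr.
  have : (d2^T *m G + G^T *m d2) *m f0 = 0 by rewrite eta_pairing_d2_skew mul0mx.
  rewrite mulmxDl -!mulmxA -ef0 => /eqP; rewrite addr_eq0 => /eqP ->.
  by rewrite opprK.
have phiE : phi = G *m f0 + d1^T *m x.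
  by rewrite -[d1^T *m x]trmxK trmx_mul trmxK trmx11 -Hx trmxK addrC subrK.
exists (f0 + d3 *m ell *m x); split.
  by rewrite mulmxDr !mulmxA eta_pairing_d3 -(mulmxA d1^T) heta mulmx1 phiE.
by rewrite mulmxDr ef0 !mulmxA hd23 !mul0mx addr0.
Qed.

(* On C, H inverts dC up to x via L; on L it uses u d3 = t eta. *)
Lemma scalar_factor_d3 (L : 'M_(q - 2, p + q)) x (u : 'rV_(p + q)) t :
  L *m dC = x%:M -> u *m d3 = t *: eta ->
  exists H : 'M_(q - 1, p + q), H *m d3 = (x * t)%:M.
Proof.
move=> LdC ud3.
have Ld3 : L *m d3 = x *: pi + L *m (d3 *m ell) *m eta.
  by rewrite {1}d3_split mulmxDr !mulmxA -(mulmxA L d3 iota) LdC mul_scalar_mx.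
have core : (t *: L - L *m (d3 *m ell) *m u) *m d3 = (t * x) *: pi.
  rewrite mulmxBl -scalemxAl -[L *m _ *m u *m d3]mulmxA ud3 Ld3.
  by rewrite -scalemxAr scalerDr addrK scalerA.
exists (iota *m (t *: L - L *m (d3 *m ell) *m u) + x *: (ell *m u)).
rewrite mulmxDl -mulmxA core -scalemxAl -mulmxA ud3 -!scalemxAr scalerA.
by rewrite (mulrC t) -scalerDr hsum scale_scalar_mx mulr1.
Qed.

Lemma exact_at_A2dual : grade_ge J 4 ->
  forall psi : 'cV_(p + q), dC^T *m psi = 0 ->
  exists phi e, psi = d2^T *m phi + G^T *m e.
Proof.
move=> HJ4 psi dCpsi0.
set u := psi^T; set T := u *m d3 *m ell; set t := T 0 0.
have ud3 : u *m d3 = t *: eta.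
  have udC0 : u *m dC = 0 by rewrite /u -[dC]trmxK -trmx_mul dCpsi0 trmx0.
  rewrite {1}d3_split mulmxDr mulmxA udC0 mul0mx add0r !mulmxA -/T.
  by rewrite [T]mx11_scalar mul_scalar_mx.
have Jt : forall x, J x -> exists k, x *: T = d1 *m k.
  move=> x /minors_ideal_left_mul [L LdC].
  have [H Hd3] := scalar_factor_d3 LdC ud3.
  have [k Hk] := scalar_factor_in_im hd12 hd23 hdex0 hdex1 hdex2 Hd3.
  by exists k; rewrite Hk [T]mx11_scalar scale_scalar_mx.
have [k Hk] := coker_torsionfree3 hd12 hd23 hex1 hex2 hex3 HJ4 Jt.
have [y Hy] : exists y, (psi - G^T *m k)^T = y *m d2.
  apply: hdex2; rewrite raddfB /= trmx_mul trmxK mulmxBl -/u ud3 -mulmxA.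
  rewrite eta_pairing_d3 mulmxA -trmx_mul -Hk trmx11.
  by rewrite [T]mx11_scalar mul_scalar_mx subrr.
exists y^T, k.
by rewrite -[d2^T *m y^T]trmxK trmx_mul !trmxK -Hy trmxK subrK.
Qed.

Lemma minors_ideal_dC_full : grade_ge J 4 -> grade_ge J 5 -> forall x, J x.
Proof.
move=> HJ4 HJ5.
have c1 : dC^T *m row_mx d2^T G^T = 0.
  by rewrite mul_mx_row -!trmx_mul d2_dC eta_pairing_dC !trmx0 row_mx0.
have c2 : row_mx d2^T G^T *m col_mx G d2 = 0.
  by rewrite mul_row_col eta_pairing_d2_skew.
have c3 : col_mx G d2 *m dC = 0 by rewrite mul_col_mx eta_pairing_dC d2_dC col_mx0.
have x1 : col_exact dC^T (row_mx d2^T G^T).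
  move=> v /(exact_at_A2dual HJ4) [phi [e ->]].
  by exists (col_mx phi e); rewrite mul_row_col.
have x2 : col_exact (row_mx d2^T G^T) (col_mx G d2).
  move=> w; rewrite -[w]vsubmxK mul_row_col => /exact_at_A1dual_A1 [f [<- <-]].
  by exists f; rewrite mul_col_mx.
have x3 : col_exact (col_mx G d2) dC.
  move=> f; rewrite mul_col_mx -(col_mx0 _ (p + 2)) => /eq_col_mx [Gf0 d2f0].
  exact: exact_at_A2.
have [X HX] : exists X, 1%:M = dC^T *m X.
  apply: col_exists_mx => j.
  apply: (coker_torsionfree4 c1 c2 c3 x1 x2 x3 dC_inj HJ5).
  by move=> x /minors_ideal_mul_im.
apply: (minors_ideal_of_left_inverse (X := X^T)).
by rewrite -[dC]trmxK -trmx_mul -HX trmx1.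
Qed.

Lemma B_acyclic : grade_ge J 4 ->
  [/\ G *m dC = 0, d2 *m dC = 0 & d2^T *m G + G^T *m d2 = 0] /\
  [/\ col_inj dC,
      forall f : 'cV_(p + q), G *m f = 0 -> d2 *m f = 0 -> exists c, f = dC *m c,
      forall phi e : 'cV_(p + 2), d2^T *m phi + G^T *m e = 0 ->
        exists f, G *m f = phi /\ d2 *m f = e
    & forall psi : 'cV_(p + q), dC^T *m psi = 0 ->
        exists phi e, psi = d2^T *m phi + G^T *m e] /\
  (grade_ge J 5 -> forall x, J x).
Proof.
move=> HJ4; split.
  by split; [exact: eta_pairing_dC | exact: d2_dC | exact: eta_pairing_d2_skew].
split; last exact: minors_ideal_dC_full.
split; [exact: dC_inj | exact: exact_at_A2 | exact: exact_at_A1dual_A1 |].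
exact: exact_at_A2dual.
Qed.

End DGAlgebra.

Theorem mainTheorem2
  (R : comNzRingType) (HR : noetherian R) (p q : nat)
  (hp : (1 <= p)%N) (hq : (3 <= q)%N)
  (* the complex A : 0 -> A3 -> A2 -> A1 -> A0 = R *)
  (d1 : 'M[R]_(1, p + 2)) (d2 : 'M[R]_(p + 2, p + q)) (d3 : 'M[R]_(p + q, q - 1))
  (hd12 : d1 *m d2 = 0) (hd23 : d2 *m d3 = 0)
  (* A acyclic *)
  (hex1 : forall v : 'cV[R]_(p + 2), d1 *m v = 0 -> exists w, v = d2 *m w)
  (hex2 : forall v : 'cV[R]_(p + q), d2 *m v = 0 -> exists w, v = d3 *m w)
  (hex3 : forall v : 'cV[R]_(q - 1), d3 *m v = 0 -> v = 0)
  (* A^* acyclic *)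
  (hdex0 : forall x : 'rV[R]_1, x *m d1 = 0 -> x = 0)
  (hdex1 : forall y : 'rV[R]_(p + 2), y *m d2 = 0 -> exists x, y = x *m d1)
  (hdex2 : forall z : 'rV[R]_(p + q), z *m d3 = 0 -> exists y, z = y *m d2)
  (* DG algebra structure: structure constants of A1 x A1 -> A2, A1 x A2 -> A3 *)
  (m1 : 'I_(p + 2) -> 'I_(p + 2) -> 'cV[R]_(p + q))
  (m2 : 'I_(p + 2) -> 'I_(p + q) -> 'cV[R]_(q - 1))
  (halt : forall e : 'cV[R]_(p + 2), bil m1 e e = 0)
  (hanti : forall e e' : 'cV[R]_(p + 2), bil m1 e e' = - bil m1 e' e)
  (hleib1 : forall e e' : 'cV[R]_(p + 2),
      d2 *m bil m1 e e' = (d1 *m e) 0 0 *: e' - (d1 *m e') 0 0 *: e)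
  (hleib2 : forall (e : 'cV[R]_(p + 2)) (f : 'cV[R]_(p + q)),
      d3 *m bil m2 e f = (d1 *m e) 0 0 *: f + bil m1 (d2 *m f) e)
  (* decomposition A3 = C (+) L: iota = inclusion of C (basis of C),
     ell = basis of L, pi / eta = the two projections (eta : A3 -> L ~ R) *)
  (iota : 'M[R]_(q - 1, q - 2)) (ell : 'cV[R]_(q - 1))
  (pi : 'M[R]_(q - 2, q - 1)) (eta : 'rV[R]_(q - 1))
  (hpi : pi *m iota = 1%:M) (heta : eta *m ell = 1%:M)
  (hpe : pi *m ell = 0) (hei : eta *m iota = 0)
  (hsum : iota *m pi + ell *m eta = 1%:M) :
  let J := minors_ideal (d3 *m iota) in
  (* the maps of B, with Hom(A1,L) ~ R^(p+2), Hom(A2,L) ~ R^(p+q),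
     Hom(C,L) ~ R^(q-2) via the basis ell of L *)
  let delta4 := fun c : 'cV[R]_(q - 2) => d3 *m iota *m c in
  let delta3 := fun f : 'cV[R]_(p + q) =>
      (\col_i (eta *m bil m2 (delta_mx i 0) f) 0 0, d2 *m f) in
  let delta2 := fun (phi e : 'cV[R]_(p + 2)) =>
      \col_j ((phi^T *m (d2 *m (delta_mx j 0 : 'cV[R]_(p + q)))) 0 0
              + (eta *m bil m2 e (delta_mx j 0 : 'cV[R]_(p + q))) 0 0) : 'cV[R]_(p + q) in
  let delta1 := fun psi : 'cV[R]_(p + q) =>
      \col_k (psi^T *m (d3 *m iota *m (delta_mx k 0 : 'cV[R]_(q - 2)))) 0 0 : 'cV[R]_(q - 2) in
  grade_ge J 4 ->
  ( (* B is a complex *)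
    (forall c, delta3 (delta4 c) = (0, 0)) /\
    (forall f, delta2 (delta3 f).1 (delta3 f).2 = 0) /\
    (forall phi e, delta1 (delta2 phi e) = 0) /\
    (* B is exact (acyclic) *)
    (forall c, delta4 c = 0 -> c = 0) /\
    (forall f, delta3 f = (0, 0) -> exists c, f = delta4 c) /\
    (forall phi e, delta2 phi e = 0 -> exists f, delta3 f = (phi, e)) /\
    (forall psi, delta1 psi = 0 -> exists phi e, psi = delta2 phi e) ) /\
  ((forall x, J x) \/ ~ grade_ge J 5).
Proof.
move=> J delta4 delta3 delta2 delta1 HJ4.
pose G := eta_pairing m2 eta.
have D3 f : delta3 f = (G *m f, d2 *m f).
  by congr (_, _); apply/colP => i; rewrite mxE eta_bil_delta_l.
have D2 phi e : delta2 phi e = d2^T *m phi + G^T *m e.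
  by apply/colP => j; rewrite mxE mulmxA tr_mulmx_delta_entry eta_bil_delta_r [RHS]mxE.
have D1 psi : delta1 psi = (d3 *m iota)^T *m psi.
  by apply/colP => k; rewrite mxE mulmxA tr_mulmx_delta_entry.
have [[GdC d2dC skew] [[injC exC exA1 exA2] Jfull]] :=
  B_acyclic hd12 hd23 hex1 hex2 hex3 hdex0 hdex1 hdex2 hanti hleib2 hpi heta hei hsum HJ4.
split.
  split; [|split; [|split; [|split; [|split; [|split]]]]].
  - by move=> c; rewrite D3 /delta4 (mulmxA G) (mulmxA d2) GdC d2dC !mul0mx.
  - by move=> f; rewrite D3 D2 !mulmxA -mulmxDl skew mul0mx.
  - move=> phi e; rewrite D2 D1 mulmxDr !mulmxA -!trmx_mul.
    by rewrite d2dC GdC !trmx0 !mul0mx addr0.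
  - by move=> c; apply: injC.
  - by move=> f; rewrite D3 => -[Gf d2f]; apply: exC.
  - by move=> phi e; rewrite D2 => /exA1 [f [Gf d2f]]; exists f; rewrite D3 Gf d2f.
  - by move=> psi; rewrite D1 => /exA2 [phi [e ->]]; exists phi, e; rewrite D2.
by case: (classic (grade_ge J 5)) => [/Jfull|]; [left | right].
Qed.
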